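(* Let $(M,g)$ be a semi-Riemannian manifold with Levi-Civita connection $\overset{\circ}{\nabla}$ and let $\pi$ be a one-form on $M$. Define the $(1,2)$-tensor field $$U(\omega,X,Y)=\frac12\left(X^\flat\big(\pi(\omega^\sharp)Y-\pi(Y)\omega^\sharp\big)+Y^\flat\big(\pi(\omega^\sharp)X-\pi(X)\omega^\sharp\big)\right)$$ and $\nabla_XY=\overset{\circ}{\nabla}_XY+U(-,X,Y)$. Then $(\nabla,U)$ is a Schrödinger connection (called the Yano-Schrödinger connection).
   Context: $X^\flat=g(X,-)$ (so $X^\flat(V)=g(X,V)$), $\omega^\sharp=g^{-1}(\omega,-)$. For a $(1,2)$-tensor field $U$, $U(-,X,Y)$ denotes the vector field with $\omega(U(-,X,Y))=U(\omega,X,Y)$. A Schrödinger connection is an affine connection $\nabla_XY=\overset{\circ}{\nabla}_XY+U(-,X,Y)$ where $U$ satisfies, for all vector fields $X,Y$ and one-forms $\omega$: (a) $U(\omega,X,Y)=U(\omega,Y,X)$, and (b) $U(\omega,X,Y)+U(\omega,Y,X)+U(X^\flat,\omega^\sharp,Y)+U(X^\flat,Y,\omega^\sharp)+U(Y^\flat,\omega^\sharp,X)+U(Y^\flat,X,\omega^\sharp)=0$. *)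

(* Pointwise (single tangent space) model of the tensor algebra. *)
From mathcomp Require Import all_boot all_order all_algebra.
Set Implicit Arguments. Unset Strict Implicit. Unset Printing Implicit Defensive.
Import Order.TTheory GRing.Theory Num.Theory.
Local Open Scope ring_scope.

(* Tangent vectors at a point: row vectors 'rV_n (components in a basis).
   Cotangent vectors: also 'rV_n (components in the dual basis).
   The metric at the point: a symmetric invertible matrix G (any signature). *)

Definition pair (R : ringType) (n : nat) (omega v : 'rV[R]_n) : R :=
  (omega *m v^T) 0 0.

Definition flat (R : ringType) (n : nat) (G : 'M[R]_n) (X : 'rV[R]_n) : 'rV[R]_n :=
  X *m G.

Definition sharp (R : comUnitRingType) (n : nat) (G : 'M[R]_n) (omega : 'rV[R]_n)
  : 'rV[R]_n := omega *m invmx G.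

Definition is_tensor12 (R : ringType) (n : nat)
  (U : 'rV[R]_n -> 'rV[R]_n -> 'rV[R]_n -> R) : Prop :=
  (forall a o1 o2 X Y, U (a *: o1 + o2) X Y = a * U o1 X Y + U o2 X Y) /\
  (forall a o X1 X2 Y, U o (a *: X1 + X2) Y = a * U o X1 Y + U o X2 Y) /\
  (forall a o X Y1 Y2, U o X (a *: Y1 + Y2) = a * U o X Y1 + U o X Y2).

Definition schrodinger_tensor (R : comUnitRingType) (n : nat) (G : 'M[R]_n)
  (U : 'rV[R]_n -> 'rV[R]_n -> 'rV[R]_n -> R) : Prop :=
  is_tensor12 U /\
  (forall omega X Y, U omega X Y = U omega Y X) /\
  (forall omega X Y,
     U omega X Y + U omega Y X
     + U (flat G X) (sharp G omega) Y + U (flat G X) Y (sharp G omega)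
     + U (flat G Y) (sharp G omega) X + U (flat G Y) X (sharp G omega) = 0).

Definition YS_U (R : fieldType) (n : nat) (G : 'M[R]_n) (pi : 'rV[R]_n)
  (omega X Y : 'rV[R]_n) : R :=
  2^-1 * ( pair (flat G X) (pair pi (sharp G omega) *: Y - pair pi Y *: sharp G omega)
         + pair (flat G Y) (pair pi (sharp G omega) *: X - pair pi X *: sharp G omega)).

(* Since g(X, w#) = w(X), U(w,X,Y) = g(X,Y) pi(w#) - (pi(Y) w(X) + pi(X) w(Y))/2,
   which is visibly multilinear and symmetric in X, Y.  By this symmetry,
   condition (b) is twice U(w,X,Y) + U(X^b,w#,Y) + U(Y^b,w#,X), in which each of
   g(X,Y) pi(w#), pi(Y) w(X) and pi(X) w(Y) occurs with coefficients
   1, -1/2, -1/2. *)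
From mathcomp Require Import all_boot all_order all_algebra.
From mathcomp Require Import ring.
Set Implicit Arguments. Unset Strict Implicit. Unset Printing Implicit Defensive.
Import Order.TTheory GRing.Theory Num.Theory.
Local Open Scope ring_scope.

Section Pairing.
Variables (R : comNzRingType) (n : nat).
Implicit Types (u v w : 'rV[R]_n) (c : R).

Lemma pairC u v : pair u v = pair v u.
Proof. by rewrite /pair !mxE; apply: eq_bigr => i _; rewrite !mxE mulrC. Qed.

Lemma pairDl w u v : pair (u + v) w = pair u w + pair v w.
Proof. by rewrite /pair mulmxDl mxE. Qed.

Lemma pairZl w c u : pair (c *: u) w = c * pair u w.
Proof. by rewrite /pair -scalemxAl mxE. Qed.

Lemma pairDr w u v : pair w (u + v) = pair w u + pair w v.
Proof. by rewrite pairC pairDl !(pairC w). Qed.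

Lemma pairZr w c u : pair w (c *: u) = c * pair w u.
Proof. by rewrite pairC pairZl pairC. Qed.

Lemma pairNr w u : pair w (- u) = - pair w u.
Proof. by rewrite -scaleN1r pairZr mulN1r. Qed.

End Pairing.

Section Musical.
Variables (R : comUnitRingType) (n : nat) (G : 'M[R]_n).
Implicit Types (u v w : 'rV[R]_n) (c : R).

Lemma flatD u v : flat G (u + v) = flat G u + flat G v.
Proof. exact: mulmxDl. Qed.

Lemma flatZ c u : flat G (c *: u) = c *: flat G u.
Proof. by rewrite /flat scalemxAl. Qed.

Lemma sharpD u v : sharp G (u + v) = sharp G u + sharp G v.
Proof. exact: mulmxDl. Qed.

Lemma sharpZ c u : sharp G (c *: u) = c *: sharp G u.
Proof. by rewrite /sharp scalemxAl. Qed.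

Lemma pair_flatC : G^T = G -> forall u v, pair (flat G u) v = pair (flat G v) u.
Proof. by move=> GT u v; rewrite pairC /pair /flat trmx_mul GT mulmxA. Qed.

Hypothesis G_unit : G \in unitmx.

Lemma sharpK u : sharp G (flat G u) = u.
Proof. by rewrite /sharp /flat -mulmxA mulmxV // mulmx1. Qed.

Lemma flatK u : flat G (sharp G u) = u.
Proof. by rewrite /sharp /flat -mulmxA mulVmx // mulmx1. Qed.

Lemma pair_flat_sharp : G^T = G -> forall u w, pair (flat G u) (sharp G w) = pair w u.
Proof. by move=> GT u w; rewrite pair_flatC // flatK. Qed.

End Musical.

Section YanoSchrodinger.
Variables (R : fieldType) (n : nat) (G : 'M[R]_n) (pi : 'rV[R]_n).
Hypotheses (G_sym : G^T = G) (G_unit : G \in unitmx).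
Implicit Types (w X Y : 'rV[R]_n).

Lemma YS_UE w X Y :
  YS_U G pi w X Y = 2^-1 * (pair pi (sharp G w) * pair (flat G X) Y *+ 2
                            - pair pi Y * pair w X - pair pi X * pair w Y).
Proof.
rewrite /YS_U !(pairDr, pairZr, pairNr) !pair_flat_sharp //.
rewrite [pair (flat G Y) X]pair_flatC //; ring.
Qed.

Lemma YS_U_sym w X Y : YS_U G pi w X Y = YS_U G pi w Y X.
Proof. by rewrite /YS_U addrC. Qed.

Lemma YS_U_tensor : is_tensor12 (YS_U G pi).
Proof.
have linear_mid a w X1 X2 Y :
    YS_U G pi w (a *: X1 + X2) Y = a * YS_U G pi w X1 Y + YS_U G pi w X2 Y.
  by rewrite !YS_UE !(pairDl, pairZl, pairDr, pairZr, flatD, flatZ); ring.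
split; [|split].
- move=> a w1 w2 X Y; rewrite !YS_UE sharpD sharpZ.
  by rewrite !(pairDl, pairZl, pairDr, pairZr); ring.
- exact: linear_mid.
- by move=> a w X Y1 Y2; rewrite !(YS_U_sym w X) linear_mid.
Qed.

Lemma YS_U_balanced w X Y :
  YS_U G pi w X Y + YS_U G pi w Y X
  + YS_U G pi (flat G X) (sharp G w) Y + YS_U G pi (flat G X) Y (sharp G w)
  + YS_U G pi (flat G Y) (sharp G w) X + YS_U G pi (flat G Y) X (sharp G w) = 0.
Proof.
rewrite [YS_U _ _ w Y X]YS_U_sym [YS_U _ _ _ Y (sharp G w)]YS_U_sym.
rewrite [YS_U _ _ _ X (sharp G w)]YS_U_sym !YS_UE !sharpK ?flatK //.
rewrite !pair_flat_sharp // [pair (flat G Y) X]pair_flatC //; ring.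
Qed.

End YanoSchrodinger.

Theorem mainTheorem6 (R : realFieldType) (n : nat) (G : 'M[R]_n) (pi : 'rV[R]_n) :
  G^T = G -> G \in unitmx -> schrodinger_tensor G (YS_U G pi).
Proof.
move=> G_sym G_unit; split; first exact: YS_U_tensor.
split; first exact: YS_U_sym.
exact: YS_U_balanced.
Qed.
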